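(* Let $\mathbf{M}\in\mathbb{R}^{n\times n}$ be symmetric positive definite, let $V=\{1,\dots,n\}$, and let $P(V)$ be a partition of $V$ into disjoint nonempty blocks. Fix a block $B\in P(V)$. Let $N_1,\dots,N_g\in P(V)\setminus\{B\}$ be the blocks $D$ with $\mathbf{M}_{BD}\neq 0$, put $N=N_1\cup\dots\cup N_g$, and let $W=V\setminus(B\cup N)$ (so $\mathbf{M}_{BW}=0$). Let $\mathbf{\Pi}\in\mathbb{R}^{n\times \pi}$ be any matrix. Let $\mathbf{M}_{BB}=\mathbf{L}\mathbf{L}^T$ be the Cholesky factorization, set $\widehat{\mathbf{M}}_{BN_j}=\mathbf{L}^{-1}\mathbf{M}_{BN_j}$, $\widehat{\mathbf{M}}_{BN}=\mathbf{L}^{-1}\mathbf{M}_{BN}$, $\widehat{\mathbf{M}}_{NB}=\widehat{\mathbf{M}}_{BN}^T$, $\mathbf{\Phi}_B=\mathbf{\Pi}(B,:)$, $\mathbf{\Phi}_{N_j}=\mathbf{\Pi}(N_j,:)$, and define the $|B|\times (g+1)\pi$ matrix $$\mathbf{N}=\begin{pmatrix}\mathbf{L}^T\mathbf{\Phi}_B & \widehat{\mathbf{M}}_{BN_1}\mathbf{\Phi}_{N_1} & \cdots & \widehat{\mathbf{M}}_{BN_g}\mathbf{\Phi}_{N_g}\end{pmatrix}.$$ Let $\mathbf{Q}=(\mathbf{Q}_1\ \mathbf{Q}_2)$ be an orthogonal $|B|\times|B|$ matrix whose first block of columns $\mathbf{Q}_1$ is an orthonormal basis of the range of $\mathbf{N}$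 (and $\mathbf{Q}_2$ an orthonormal basis of its orthogonal complement). With the variables ordered as $(B,N,W)$ and the $B$-block further split according to $(\mathbf{Q}_1,\mathbf{Q}_2)$, define $$\mathbf{\mathcal{B}}=\begin{pmatrix}\mathbf{L}\mathbf{Q} & \\ & \mathbf{I}\end{pmatrix},\qquad \mathbf{M}_{(+)}=\begin{pmatrix}\mathbf{I} & 0 & \mathbf{Q}_1^T\widehat{\mathbf{M}}_{BN} & 0\\ 0 & \mathbf{I} & 0 & 0\\ \widehat{\mathbf{M}}_{NB}\mathbf{Q}_1 & 0 & \mathbf{M}_{NN} & \mathbf{M}_{NW}\\ 0 & 0 & \mathbf{M}_{WN} & \mathbf{M}_{WW}\end{pmatrix},\qquad \widetilde{\mathbf{M}}=\mathbf{\mathcal{B}}\,\mathbf{M}_{(+)}\,\mathbf{\mathcal{B}}^T.$$ Then for every block $D\in P(V)$ we have $\mathbf{M}\mathbf{\Pi}_D=\widetilde{\mathbf{M}}\mathbf{\Pi}_D$, where $\mathbf{\Pi}_D\in\mathbb{R}^{n\times\pi}$ is defined by $(\mathbf{\Pi}_D)_{ij}=\mathbf{\Pi}_{ij}$ if $i\in D$ and $0$ otherwise. Moreover, $\widetilde{\mathbf{M}}$ is symmetric positive definite.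
   Context: In the application, the columns of $\mathbf{\Pi}$ are discretized polynomials of the grid coordinates (e.g. $\mathbf{\Pi}=\mathbf{\Pi}^0$ the all-ones vector, or $\mathbf{\Pi}^1$ with rows $(1,x_i,y_i,z_i)$), but the statement holds for any $\mathbf{\Pi}$. For index sets $S,T$, $\mathbf{M}_{ST}$ denotes the submatrix of $\mathbf{M}$ with rows in $S$ and columns in $T$, and $\mathbf{\Pi}(S,:)$ the rows of $\mathbf{\Pi}$ indexed by $S$. *)

(* All matrices are indexed in the ORIGINAL coordinates
   V = 'I_n; index sets are {set 'I_n}, enumerated in increasing order. *)
From HB Require Import structures.
From mathcomp Require Import all_boot all_order all_algebra.
Unset Strict Implicit. Unset Printing Implicit Defensive.
Import Order.TTheory GRing.Theory Num.Theory.
Local Open Scope ring_scope.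

Section Defs.
Context {R : realFieldType}.

Definition sym_posdef {n} (A : 'M[R]_n) : Prop :=
  A^T = A /\ forall x : 'cV[R]_n, x != 0 -> 0 < (x^T *m A *m x) ord0 ord0.

Definition subm {n} (S T : {set 'I_n}) (A : 'M[R]_n) : 'M[R]_(#|S|, #|T|) :=
  \matrix_(i, j) A (enum_val i) (enum_val j).

Definition subr {n p} (S : {set 'I_n}) (A : 'M[R]_(n, p)) : 'M[R]_(#|S|, p) :=
  \matrix_(i, j) A (enum_val i) j.

Definition restr_rows {n p} (D : {set 'I_n}) (A : 'M[R]_(n, p)) : 'M[R]_(n, p) :=
  \matrix_(i, j) if i \in D then A i j else 0.

Definition selmx {m k} (f : 'I_m -> 'I_k) : 'M[R]_(m, k) :=
  \matrix_(i, j) (f i == j)%:R.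

Definition nbrs {n} (P : {set {set 'I_n}}) (B : {set 'I_n}) (M : 'M[R]_n) :=
  [set D in P | (D != B) && (subm B D M != 0)].

Definition Nset {n} (P : {set {set 'I_n}}) (B : {set 'I_n}) (M : 'M[R]_n) : {set 'I_n} :=
  \bigcup_(D in nbrs P B M) D.

Definition Wset {n} (P : {set {set 'I_n}}) (B : {set 'I_n}) (M : 'M[R]_n) : {set 'I_n} :=
  ~: (B :|: Nset P B M).

Definition Esel {n} (S : {set 'I_n}) : 'M[R]_(#|S|, n) :=
  selmx (fun i : 'I_#|S| => enum_val i).

(* the |B| x (g+1)pi matrix
   N = ( L^T Phi_B | Mhat_{BN_1} Phi_{N_1} | ... | Mhat_{BN_g} Phi_{N_g} ),
   with N_j = enum_val j (j-th neighbour block), Mhat_{BN_j} = L^{-1} M_{BN_j}. *)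
Definition Nmat {n p} (P : {set {set 'I_n}}) (B : {set 'I_n}) (M : 'M[R]_n) (L : 'M[R]_#|B|)
    (Pi : 'M[R]_(n, p)) :=
  row_mx (L^T *m subr B Pi)
    (\mxrow_(j < #|nbrs P B M|)
       (invmx L *m subm B (enum_val j) M *m subr (enum_val j) Pi)).

Definition Q1of {m r} (hr : (r <= m)%N) (Q : 'M[R]_m) : 'M[R]_(m, r) :=
  colsub (widen_ord hr) Q.

(* Btilde-matrix calB = diag(L Q, I) and M_(+), written in the original
   coordinates: the new coordinates of the B-block (columns of Q, i.e.
   Q1 then Q2) are identified with the elements of B in increasing order. *)
Definition calB {n} (P : {set {set 'I_n}}) (B : {set 'I_n}) (M : 'M[R]_n) (L Q : 'M[R]_#|B|)
    : 'M[R]_n :=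
  let EB := Esel B in
  let EN := Esel (Nset P B M) in
  let EW := Esel (Wset P B M) in
  EB^T *m (L *m Q) *m EB + EN^T *m EN + EW^T *m EW.

Definition Mplus {n} (P : {set {set 'I_n}}) (B : {set 'I_n}) (M : 'M[R]_n) (L Q : 'M[R]_#|B|)
    {r} (hr : (r <= #|B|)%N) : 'M[R]_n :=
  let NS := Nset P B M in
  let WS := Wset P B M in
  let EB := Esel B in
  let EN := Esel NS in
  let EW := Esel WS in
  let E1 := selmx (widen_ord hr) in   (* Q1-part of the B-block inside B *)
  let Q1 := Q1of hr Q in
  let MhBN := invmx L *m subm B NS M in
  let MhNB := MhBN^T in
  EB^T *m EB
  + EB^T *m E1^T *m (Q1^T *m MhBN) *m EN
  + EN^T *m (MhNB *m Q1) *m E1 *m EB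
  + EN^T *m subm NS NS M *m EN + EN^T *m subm NS WS M *m EW
  + EW^T *m subm WS NS M *m EN + EW^T *m subm WS WS M *m EW.

Definition Mtilde {n} (P : {set {set 'I_n}}) (B : {set 'I_n}) (M : 'M[R]_n) (L Q : 'M[R]_#|B|)
    {r} (hr : (r <= #|B|)%N) : 'M[R]_n :=
  calB P B M L Q *m Mplus P B M L Q hr *m (calB P B M L Q)^T.

End Defs.

(* The selection
   matrix b = E_B has orthonormal rows; it splits R^n into the B-coordinates
   and ker b = span(N u W), with orthogonal projector cmpl b = I - b^T b.  In
   this splitting [embed Y] is diag(Y, I) and [blk Y K S] is the 2x2 block
   matrix [[Y, K], [K^T, S_(N u W)]].  Writing Mhat = L^-1 M_B,(N u W), whose
   W-columns vanish because M_BW = 0, we get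
     M = blk (L L^T) (L Mhat) M,           M_(+) = blk I (E1^T Q1^T Mhat) M,
     calB = embed (L Q),                   Mtilde = blk (L L^T) (L Q1 Q1^T Mhat) M.
   (1) M and Mtilde differ only in their coupling block, by the projector
       Q1 Q1^T onto range(N); both Mhat Pi_D and L^T (Pi_D)_B have their columns
       in range(N), so M Pi_D = Mtilde Pi_D.
   (2) The coupling Q1^T Mhat of M_(+) is no larger than Mhat, which is strictly
       dominated by M on ker b (Schur complement of the SPD matrix M), so M_(+)
       is SPD; Mtilde is a congruence of M_(+) by the invertible calB. *)

From HB Require Import structures.
From mathcomp Require Import all_boot all_order all_algebra.
From mathcomp Require Import lra.
Import Order.TTheory GRing.Theory Num.Theory.
Local Open Scope ring_scope.

Set Implicit Arguments. Unset Strict Implicit. Unset Printing Implicit Defensive.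

Section Selection.
Context {R : realFieldType}.

Lemma selmx_mul_tr m1 m2 k (f : 'I_m1 -> 'I_k) (g : 'I_m2 -> 'I_k) :
  (selmx f : 'M[R]_(m1, k)) *m (selmx g)^T = \matrix_(i, j) (f i == g j)%:R.
Proof.
apply/matrixP=> i j; rewrite !mxE (bigD1 (f i)) //= !mxE eqxx mul1r.
rewrite big1 ?addr0; first by rewrite eq_sym.
by move=> l /negbTE hl; rewrite !mxE eq_sym hl mul0r.
Qed.

Lemma selmx_inj_id m k (f : 'I_m -> 'I_k) : injective f ->
  (selmx f : 'M[R]_(m, k)) *m (selmx f)^T = 1%:M.
Proof.
by move=> f_inj; rewrite selmx_mul_tr; apply/matrixP=> i j; rewrite !mxE (inj_eq f_inj).
Qed.

Lemma rowsubE m k k' (g : 'I_k' -> 'I_k) (A : 'M[R]_(k, m)) :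
  rowsub g A = selmx g *m A.
Proof.
apply/matrixP=> i j; rewrite !mxE (bigD1 (g i)) //= !mxE eqxx mul1r.
by rewrite big1 ?addr0 // => l /negbTE hl; rewrite !mxE eq_sym hl mul0r.
Qed.

Lemma colsubE m k k' (g : 'I_k' -> 'I_k) (A : 'M[R]_(m, k)) :
  colsub g A = A *m (selmx g)^T.
Proof.
apply/matrixP=> i j; rewrite !mxE (bigD1 (g j)) //= !mxE eqxx mulr1.
by rewrite big1 ?addr0 // => l /negbTE hl; rewrite !mxE eq_sym hl mulr0.
Qed.

Definition proj n (S : {set 'I_n}) : 'M[R]_n := (Esel S)^T *m Esel S.

Lemma projE n (S : {set 'I_n}) :
  proj S = \matrix_(i, j) ((i == j) && (i \in S))%:R.
Proof.
apply/matrixP=> i j; rewrite !mxE.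
under eq_bigr do rewrite !mxE.
rewrite -(big_enum_val (fun x : 'I_n => (x == i)%:R * (x == j)%:R : R)) /=.
case: (boolP (i \in S)) => iS.
  rewrite (bigD1 i) //= eqxx mul1r big1 ?addr0 ?andbT //.
  by move=> x /andP[_ /negbTE ->]; rewrite mul0r.
rewrite andbF big1 // => x xS; case: eqP => [ex|]; last by rewrite mul0r.
by move: xS; rewrite ex (negbTE iS).
Qed.

Lemma Esel_id n (S : {set 'I_n}) : (Esel S : 'M[R]__) *m (Esel S)^T = 1%:M.
Proof. exact/selmx_inj_id/enum_val_inj. Qed.

Lemma Esel_disj n (S T : {set 'I_n}) : [disjoint S & T] ->
  (Esel S : 'M[R]__) *m (Esel T)^T = 0.
Proof.
move=> dST; rewrite selmx_mul_tr; apply/matrixP=> i j; rewrite !mxE.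
case: eqP => // e; move: (enum_valP i) (enum_valP j); rewrite e => h1 h2.
by rewrite (disjointFr dST h1) in h2.
Qed.

Lemma proj_unity n (S T : {set 'I_n}) : [disjoint S & T] ->
  proj S + proj T + proj (~: (S :|: T)) = 1%:M.
Proof.
move=> dST; apply/matrixP=> i j; rewrite !projE !mxE.
case: eqP => _; last by rewrite !addr0.
rewrite !inE; case: (boolP (i \in S)) => iS /=.
  by rewrite (disjointFr dST iS) !addr0.
by case: (i \in T); rewrite /= ?addr0 ?add0r.
Qed.

Lemma submE n (S T : {set 'I_n}) (A : 'M[R]_n) :
  subm S T A = Esel S *m A *m (Esel T)^T.
Proof. by rewrite -rowsubE -colsubE; apply/matrixP=> i j; rewrite !mxE. Qed.

Lemma subrE n q (S : {set 'I_n}) (A : 'M[R]_(n, q)) : subr S A = Esel S *m A.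
Proof. by rewrite -rowsubE; apply/matrixP=> i j; rewrite !mxE. Qed.

Lemma restr_rowsE n q (D : {set 'I_n}) (A : 'M[R]_(n, q)) :
  restr_rows D A = proj D *m A.
Proof.
apply/matrixP=> i j; rewrite projE !mxE (bigD1 i) //= !mxE eqxx /=.
rewrite big1 ?addr0; first by case: (i \in D); rewrite ?mul1r ?mul0r.
by move=> l /negbTE hl; rewrite !mxE eq_sym hl mul0r.
Qed.

End Selection.

Section InnerProduct.
Variable R : realFieldType.

Definition dot m (x y : 'cV[R]_m) : R := (x^T *m y) ord0 ord0.

Lemma dotC m (x y : 'cV[R]_m) : dot x y = dot y x.
Proof.
by rewrite /dot -[x^T *m y]trmxK trmx_mul trmxK [LHS]mxE.
Qed.

Lemma dotDr m (x y y' : 'cV[R]_m) : dot x (y + y') = dot x y + dot x y'.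
Proof. by rewrite /dot mulmxDr mxE. Qed.

Lemma dotDl m (x x' y : 'cV[R]_m) : dot (x + x') y = dot x y + dot x' y.
Proof. by rewrite dotC dotDr !(dotC y). Qed.

Lemma dotNr m (x y : 'cV[R]_m) : dot x (- y) = - dot x y.
Proof. by rewrite /dot mulmxN mxE. Qed.

Lemma dotNl m (x y : 'cV[R]_m) : dot (- x) y = - dot x y.
Proof. by rewrite dotC dotNr dotC. Qed.

Lemma dot0r m (x : 'cV[R]_m) : dot x 0 = 0.
Proof. by rewrite /dot mulmx0 mxE. Qed.

Lemma dot_mulmx m k (A : 'M[R]_(k, m)) (x : 'cV[R]_k) (y : 'cV[R]_m) :
  dot x (A *m y) = dot (A^T *m x) y.
Proof. by rewrite /dot trmx_mul trmxK mulmxA. Qed.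

Lemma dot_sqr m (x : 'cV[R]_m) : dot x x = \sum_i x i ord0 ^+ 2.
Proof. by rewrite /dot mxE; apply: eq_bigr => i _; rewrite mxE expr2. Qed.

Lemma dot_ge0 m (x : 'cV[R]_m) : 0 <= dot x x.
Proof. by rewrite dot_sqr sumr_ge0 // => i _; rewrite sqr_ge0. Qed.

Lemma dot_gt0 m (x : 'cV[R]_m) : x != 0 -> 0 < dot x x.
Proof.
move=> x_neq0; rewrite lt_def dot_ge0 andbT; apply: contra x_neq0.
rewrite dot_sqr => /eqP /psumr_eq0P sq0; apply/eqP/matrixP=> i j.
rewrite (ord1 j) mxE; apply/eqP; rewrite -sqrf_eq0.
by apply/eqP/sq0 => // l _; rewrite sqr_ge0.
Qed.

(* A matrix with orthonormal rows does not increase Euclidean length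
   (Bessel's inequality): [E^T E x] is the orthogonal projection of [x]. *)
Lemma dot_contract r m (E : 'M[R]_(r, m)) (x : 'cV[R]_m) : E *m E^T = 1%:M ->
  dot (E *m x) (E *m x) <= dot x x.
Proof.
move=> EEt; set y := E^T *m (E *m x).
have Ey : dot y y = dot (E *m x) (E *m x).
  by rewrite /y [LHS]dot_mulmx trmxK (mulmxA E) EEt mul1mx.
have E_xy : E *m (x - y) = 0 by rewrite mulmxBr /y (mulmxA E) EEt mul1mx subrr.
have orth : dot (x - y) y = 0 by rewrite /y dot_mulmx trmxK E_xy dotC dot0r.
rewrite -Ey; have -> : x = y + (x - y) by rewrite addrC subrK.
move: (x - y) orth => d orth; rewrite !dotDl !dotDr orth (dotC y d) orth.
have := dot_ge0 d; lra.
Qed.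

Lemma dot_isometry r m (E : 'M[R]_(r, m)) (x : 'cV[R]_r) : E *m E^T = 1%:M ->
  dot (E^T *m x) (E^T *m x) = dot x x.
Proof. by move=> EEt; rewrite dot_mulmx trmxK mulmxA EEt mul1mx. Qed.

Lemma qformE n (A : 'M[R]_n) (x : 'cV[R]_n) :
  (x^T *m A *m x) ord0 ord0 = dot x (A *m x).
Proof. by rewrite /dot mulmxA. Qed.

Lemma posdef_congr n (A C : 'M[R]_n) : sym_posdef A -> C \in unitmx ->
  sym_posdef (C *m A *m C^T).
Proof.
move=> [A_sym A_pos] C_unit; split; first by rewrite !trmx_mul trmxK A_sym mulmxA.
move=> x x_neq0; rewrite qformE -!mulmxA dot_mulmx -qformE.
apply: A_pos; apply: contra x_neq0 => /eqP Ctx0.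
by rewrite -[x]mul1mx -trmx1 -(mulmxV C_unit) trmx_mul -mulmxA Ctx0 mulmx0.
Qed.

End InnerProduct.

(* A row-orthonormal [b : 'M_(k, n)] splits [R^n] into the "block" coordinates
   [b x] and the complement [ker b]; [cmpl] is the orthogonal projector onto
   [ker b].  [embed Y] and [blk Y K S] are the 2x2 block matrices
   [diag(Y, I)] and [[Y, K], [K^T, S]] written in the original coordinates. *)
Section BlockForm.
Variables (R : realFieldType) (k n : nat) (b : 'M[R]_(k, n)).
Hypothesis b_orth : b *m b^T = 1%:M.

(* Locked, so that distributivity rewrites do not unfold it. *)
Fact cmpl_key : unit. Proof. by []. Qed.
Definition cmpl : 'M[R]_n := locked_with cmpl_key (1%:M - b^T *m b).

Lemma cmplE : cmpl = 1%:M - b^T *m b.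
Proof. exact: unlock. Qed.

Lemma b_cmpl : b *m cmpl = 0.
Proof. by rewrite cmplE mulmxBr mulmx1 mulmxA b_orth mul1mx subrr. Qed.

Lemma cmpl_tr : cmpl^T = cmpl.
Proof. by rewrite cmplE linearB /= trmx1 trmx_mul trmxK. Qed.

Lemma cmpl_bT : cmpl *m b^T = 0.
Proof. by rewrite -cmpl_tr -trmx_mul b_cmpl trmx0. Qed.

Lemma cmpl_idem : cmpl *m cmpl = cmpl.
Proof. by rewrite {1}cmplE mulmxBl mul1mx -mulmxA b_cmpl mulmx0 subr0. Qed.

Lemma cmpl_split : b^T *m b + cmpl = 1%:M.
Proof. by rewrite cmplE addrC subrK. Qed.

(* The same identities with an arbitrary left factor, for rewriting
   left-associated products. *)
Lemma mulmx_b_bT m (X : 'M[R]_(m, k)) : X *m b *m b^T = X.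
Proof. by rewrite -mulmxA b_orth mulmx1. Qed.

Lemma mulmx_b_cmpl m (X : 'M[R]_(m, k)) : X *m b *m cmpl = 0.
Proof. by rewrite -mulmxA b_cmpl mulmx0. Qed.

Lemma mulmx_cmpl_bT m (X : 'M[R]_(m, n)) : X *m cmpl *m b^T = 0.
Proof. by rewrite -mulmxA cmpl_bT mulmx0. Qed.

Lemma mulmx_cmpl_idem m (X : 'M[R]_(m, n)) : X *m cmpl *m cmpl = X *m cmpl.
Proof. by rewrite -mulmxA cmpl_idem. Qed.

Definition embed (Y : 'M[R]_k) : 'M[R]_n := b^T *m Y *m b + cmpl.

Lemma embedM (Y Z : 'M[R]_k) : embed Y *m embed Z = embed (Y *m Z).
Proof.
rewrite /embed mulmxDl !mulmxDr !mulmxA mulmx_b_bT mulmx_b_cmpl cmpl_bT.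
by rewrite cmpl_idem !mul0mx addr0 add0r.
Qed.

Lemma embed_tr (Y : 'M[R]_k) : (embed Y)^T = embed Y^T.
Proof. by rewrite /embed raddfD /= !trmx_mul trmxK cmpl_tr mulmxA. Qed.

Lemma embed_unit (Y : 'M[R]_k) : Y \in unitmx -> embed Y \in unitmx.
Proof.
move=> Y_unit; have : embed Y *m embed (invmx Y) = 1%:M.
  by rewrite embedM mulmxV // /embed mulmx1 cmpl_split.
by case/mulmx1_unit.
Qed.

Definition blk (Y : 'M[R]_k) (K : 'M[R]_(k, n)) (S : 'M[R]_n) : 'M[R]_n :=
  b^T *m Y *m b + b^T *m K + K^T *m b + cmpl *m S *m cmpl.

Lemma blk_decomp (S : 'M[R]_n) : S^T = S ->
  S = blk (b *m S *m b^T) (b *m S *m cmpl) S.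
Proof.
move=> S_sym; rewrite /blk !trmx_mul cmpl_tr S_sym.
transitivity ((b^T *m b + cmpl) *m S *m (b^T *m b + cmpl)).
  by rewrite cmpl_split mul1mx mulmx1.
by rewrite !mulmxDl !mulmxDr !mulmxA !addrA.
Qed.

Lemma blk_tr (Y : 'M[R]_k) K S : (blk Y K S)^T = blk Y^T K S^T.
Proof.
rewrite /blk !linearD /= !trmx_mul !trmxK cmpl_tr !mulmxA.
by rewrite -!addrA; congr (_ + _); rewrite addrCA.
Qed.

Lemma blk_congr (Z Y : 'M[R]_k) K S : K *m b^T = 0 ->
  embed Z *m blk Y K S *m (embed Z)^T = blk (Z *m Y *m Z^T) (Z *m K) S.
Proof.
move=> KbT.
have XKbT m (X : 'M[R]_(m, k)) : X *m K *m b^T = 0 by rewrite -mulmxA KbT mulmx0.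
have XbKT m (X : 'M[R]_(m, k)) : X *m b *m K^T = 0.
  by rewrite -mulmxA -[b *m _]trmxK trmx_mul !trmxK KbT trmx0 mulmx0.
have XKcmpl m (X : 'M[R]_(m, k)) : X *m K *m cmpl = X *m K.
  by rewrite -mulmxA cmplE mulmxBr mulmx1 mulmxA KbT mul0mx subr0.
have cmplKT : cmpl *m K^T = K^T.
  by rewrite -cmpl_tr -trmx_mul -[K]mul1mx XKcmpl mul1mx.
rewrite embed_tr /blk /embed !trmx_mul.
rewrite !(mulmxDl, mulmxDr, mulmxA) !(mulmx_b_bT, XKbT, XbKT, XKcmpl, mulmx_b_cmpl).
rewrite !(cmpl_bT, cmplKT, cmpl_idem, mulmx_cmpl_bT, mulmx_cmpl_idem, mul0mx, mulmx0).
by rewrite !(addr0, add0r) addrA (addrAC _ (K^T *m Z^T *m b)).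
Qed.

Lemma blk_mul_eq q (Y : 'M[R]_k) (K1 K2 : 'M[R]_(k, n)) S (X : 'M[R]_(n, q)) :
  K1 *m X = K2 *m X -> K1^T *m (b *m X) = K2^T *m (b *m X) ->
  blk Y K1 S *m X = blk Y K2 S *m X.
Proof. by move=> eqK eqKT; rewrite /blk !mulmxDl -!mulmxA eqK eqKT. Qed.

(* Schur complement bound: for [M] positive definite with Cholesky-type
   factorization [b M b^T = L L^T], every nonzero [z] in [ker b] satisfies
   [|a|^2 < z^T M z] with [a = L^-1 b M z]; the gap is [x^T M x] for
   [x = z - b^T L^-T a], which is nonzero. *)
Lemma schur_gap (M : 'M[R]_n) (L : 'M[R]_k) (z : 'cV[R]_n) :
  sym_posdef M -> L \in unitmx -> b *m M *m b^T = L *m L^T ->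
  z != 0 -> b *m z = 0 ->
  dot (invmx L *m (b *m M *m z)) (invmx L *m (b *m M *m z)) < dot z (M *m z).
Proof.
move=> [M_sym M_pos] L_unit bMbT z_neq0 bz0.
have [a bMz] : exists a, b *m M *m z = L *m a.
  by exists (invmx L *m (b *m M *m z)); rewrite mulKVmx.
rewrite bMz mulKmx //.
have [c LTc] : exists c, L^T *m c = a.
  by exists ((invmx L)^T *m a); rewrite mulmxA -trmx_mul mulVmx // trmx1 mul1mx.
have x_neq0 : z - b^T *m c != 0.
  apply: contra z_neq0 => /eqP x0.
  have bx : b *m (z - b^T *m c) = - c by rewrite mulmxBr bz0 mulmxA b_orth mul1mx sub0r.
  have c0 : c = 0 by rewrite -[c]opprK -bx x0 mulmx0 oppr0.
  by rewrite -[z](subrK (b^T *m c)) x0 c0 mulmx0 addr0.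
have cross : dot (b^T *m c) (M *m z) = dot a a.
  by rewrite dotC dot_mulmx trmxK mulmxA bMz dotC dot_mulmx LTc.
have cross' : dot z (M *m (b^T *m c)) = dot a a.
  by rewrite dot_mulmx M_sym dotC cross.
have diag : dot (b^T *m c) (M *m (b^T *m c)) = dot a a.
  rewrite dotC dot_mulmx trmxK !mulmxA bMbT -mulmxA dotC dot_mulmx.
  by rewrite LTc.
have := M_pos _ x_neq0; rewrite qformE mulmxBr !dotDl !dotDr !dotNl !dotNr.
rewrite cross cross' diag; lra.
Qed.

(* Positive definiteness of [[I, K], [K^T, S]] from a strict bound of the
   coupling [K] by [S] on [ker b]: the form is [|u + K z|^2 + (z^T S z - |K z|^2)]. *)
Lemma blk_posdef (K : 'M[R]_(k, n)) (S : 'M[R]_n) : K *m b^T = 0 -> S^T = S ->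
  (forall z, z != 0 -> b *m z = 0 -> dot (K *m z) (K *m z) < dot z (S *m z)) ->
  sym_posdef (blk 1%:M K S).
Proof.
move=> KbT S_sym gap; split; first by rewrite blk_tr trmx1 S_sym.
move=> y y_neq0; rewrite qformE.
set u := b *m y; set z := cmpl *m y.
have y_split : y = b^T *m u + z by rewrite mulmxA -mulmxDl cmpl_split mul1mx.
have Ky : K *m y = K *m z by rewrite y_split mulmxDr mulmxA KbT mul0mx add0r.
have blk_y : blk 1%:M K S *m y = b^T *m (u + K *m z) + K^T *m u + cmpl *m (S *m z).
  rewrite /blk mulmx1 !mulmxDl mulmxDr -!mulmxA -/u Ky.
  by rewrite -[cmpl *m y]/z.
rewrite blk_y !dotDr (dot_mulmx (b^T)) (dot_mulmx (K^T)) (dot_mulmx cmpl).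
rewrite !trmxK cmpl_tr -/u -/z Ky (dotC (K *m z) u) !dotDr.
have := dot_ge0 (u + K *m z); rewrite !dotDl !dotDr (dotC (K *m z) u).
have [z0 | z_neq0] := eqVneq z 0.
  have u_neq0 : u != 0.
    by apply: contra y_neq0 => /eqP u0; rewrite y_split u0 z0 mulmx0 addr0.
  have := dot_gt0 u_neq0; rewrite z0 !mulmx0 !dot0r; lra.
have bz0 : b *m z = 0 by rewrite mulmxA b_cmpl mul0mx.
have := gap z z_neq0 bz0; lra.
Qed.
End BlockForm.

Lemma subm_eq0_entry (R : realFieldType) n (S T : {set 'I_n}) (A : 'M[R]_n) x y :
  subm S T A = 0 -> x \in S -> y \in T -> A x y = 0.
Proof.
move=> A0 xS yT.
have := congr1 (fun X : 'M[R]_(#|S|, #|T|) => X (enum_rank_in xS x) (enum_rank_in yT y)) A0.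
by rewrite /= !mxE !enum_rankK_in.
Qed.

Section PartitionFacts.
Variables (R : realFieldType) (n : nat) (M : 'M[R]_n).
Variables (P : {set {set 'I_n}}) (B : {set 'I_n}).
Hypotheses (P_part : partition P [set: 'I_n]) (BP : B \in P).

Lemma disjoint_blocks D : D \in P -> D != B -> [disjoint B & D].
Proof.
move=> DP DB; case/and3P: P_part => _ /trivIsetP P_triv _.
by apply: P_triv; rewrite // eq_sym.
Qed.

Lemma nonnbr_subm_eq0 D : D \in P -> D != B -> D \notin nbrs P B M ->
  subm B D M = 0.
Proof. by move=> DP DB; rewrite inE DP DB /= negbK => /eqP. Qed.

Lemma disjoint_B_N : [disjoint B & Nset P B M].
Proof.
apply: bigcup_disjoint => D; rewrite inE => /and3P[DP DB _].
exact: disjoint_blocks.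
Qed.

(* [M_BW = 0]: every index of [W] lies in a block that is not a neighbour. *)
Lemma subm_B_W : subm B (Wset P B M) M = 0.
Proof.
apply/matrixP=> i j; rewrite !mxE.
move: (enum_valP i) (enum_valP j); set x := enum_val i; set y := enum_val j.
rewrite !inE negb_or => xB /andP[yB yN].
have yP : y \in cover P by rewrite (cover_partition P_part) inE.
have DP := pblock_mem yP; have yD : y \in pblock P y by rewrite mem_pblock.
have DB : pblock P y != B by apply: contraNneq yB => <-.
apply: (subm_eq0_entry (nonnbr_subm_eq0 DP DB _) xB yD).
by apply: contraNN yN => Dn; apply: (subsetP (bigcup_sup _ Dn)).
Qed.

Lemma cmpl_B : cmpl (Esel B : 'M[R]__) = proj (Nset P B M) + proj (Wset P B M).
Proof.
rewrite cmplE -(proj_unity disjoint_B_N) -[proj B + _ + _]addrA.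
by rewrite [proj B + _]addrC addrK.
Qed.

Lemma B_M_cmpl : Esel B *m M *m cmpl (Esel B) = Esel B *m M *m proj (Nset P B M).
Proof.
rewrite cmpl_B mulmxDr [proj (Wset _ _ _)]/proj (mulmxA _ (Esel _)^T) -submE.
by rewrite subm_B_W mul0mx addr0.
Qed.

End PartitionFacts.

Lemma colspan_proj_fix (R : realFieldType) m r q (U : 'M[R]_(m, r)) (Z : 'M[R]_(m, q)) :
  U^T *m U = 1%:M -> (Z^T <= U^T)%MS -> U *m U^T *m Z = Z.
Proof.
move=> UtU /submxP[D ZtE]; rewrite -[Z]trmxK ZtE trmx_mul trmxK.
by rewrite mulmxA -(mulmxA U) UtU mulmx1.
Qed.

Section RangeOfN.
Variables (R : realFieldType) (n p : nat) (M : 'M[R]_n) (P : {set {set 'I_n}}).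
Variables (B : {set 'I_n}) (L : 'M[R]_#|B|) (Pi : 'M[R]_(n, p)).

Lemma Nmat_range_B : ((L^T *m subr B Pi)^T <= (Nmat P B M L Pi)^T)%MS.
Proof.
have -> : L^T *m subr B Pi = Nmat P B M L Pi *m col_mx 1%:M 0.
  by rewrite /Nmat mul_row_col mulmx0 addr0 mulmx1.
by rewrite trmx_mul submxMl.
Qed.

Lemma Nmat_range_nbr D : D \in nbrs P B M ->
  ((invmx L *m subm B D M *m subr D Pi)^T <= (Nmat P B M L Pi)^T)%MS.
Proof.
move=> Dn; rewrite -(enum_rankK_in Dn Dn); set j := enum_rank_in Dn D.
set F := \mxrow_(i < #|nbrs P B M|)
  (invmx L *m subm B (enum_val i) M *m subr (enum_val i) Pi).
have -> : invmx L *m subm B (enum_val j) M *m subr (enum_val j) Pi = submxrow F j.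
  by rewrite mxrowK.
have -> : F = Nmat P B M L Pi *m col_mx 0 1%:M.
  by rewrite /Nmat mul_row_col mulmx0 add0r mulmx1.
by rewrite /submxrow colsubE -mulmxA trmx_mul submxMl.
Qed.

(* For a block [D <> B] of the partition, [Mhat_BD Phi_D] lies in the range
   of [N]: either [D] is a neighbour, or [M_BD = 0]. *)
Lemma Nmat_range_block D : D \in P -> D != B ->
  ((invmx L *m subm B D M *m subr D Pi)^T <= (Nmat P B M L Pi)^T)%MS.
Proof.
move=> DP DB; have [Dn | Dnn] := boolP (D \in nbrs P B M).
  exact: Nmat_range_nbr.
by rewrite (nonnbr_subm_eq0 DP DB Dnn) mulmx0 mul0mx trmx0 sub0mx.
Qed.

End RangeOfN.

Lemma trig_posdiag_unit (R : realFieldType) k (L : 'M[R]_k) :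
  is_trig_mx L -> (forall i, 0 < L i i) -> L \in unitmx.
Proof.
move=> L_trig L_pos; rewrite unitmxE det_trig // unitfE.
by apply: lt0r_neq0; apply: prodr_gt0 => i _; apply: L_pos.
Qed.

Section Lemma3p1.
Variables (R : realFieldType) (n p : nat) (M : 'M[R]_n).
Variables (P : {set {set 'I_n}}) (B : {set 'I_n}) (Pi : 'M[R]_(n, p)).
Variables (L Q : 'M[R]_#|B|) (r : nat) (hr : (r <= #|B|)%N).
Hypotheses (M_spd : sym_posdef M) (P_part : partition P [set: 'I_n]) (BP : B \in P).
Hypotheses (L_unit : L \in unitmx) (LLt : L *m L^T = subm B B M).
Hypotheses (QtQ : Q^T *m Q = 1%:M) (Q1_range : ((Q1of hr Q)^T == (Nmat P B M L Pi)^T)%MS).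

Local Notation b := (Esel B : 'M[R]_(#|B|, n)).
Local Notation Q1 := (Q1of hr Q).
Local Notation E1 := (selmx (widen_ord hr) : 'M[R]_(r, #|B|)).
(* [L^-1 M_B,(N u W)] as a [|B| x n] matrix: its [N]-columns form [Mhat_BN],
   its [B]- and [W]-columns vanish. *)
Local Notation Mhat := (invmx L *m (b *m M *m cmpl b)).

Let b_orth : b *m b^T = 1%:M := Esel_id B.

Lemma Mhat_bT : Mhat *m b^T = 0.
Proof. by rewrite -mulmxA mulmx_cmpl_bT ?mulmx0. Qed.

Lemma Mhat_N : invmx L *m subm B (Nset P B M) M *m Esel (Nset P B M) = Mhat.
Proof. by rewrite submE (B_M_cmpl M P_part BP) /proj !mulmxA. Qed.

Lemma Q1E : Q1 = Q *m E1^T.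
Proof. exact: colsubE. Qed.

Lemma E1_orth : E1 *m E1^T = 1%:M.
Proof. by apply: selmx_inj_id => i j; move/(congr1 val) => /= /val_inj. Qed.

Lemma Q1_orth : Q1^T *m Q1 = 1%:M.
Proof. by rewrite Q1E trmx_mul trmxK mulmxA -(mulmxA E1) QtQ mulmx1 E1_orth. Qed.

Lemma calB_embed : calB P B M L Q = embed b (L *m Q).
Proof. by rewrite /calB /embed -addrA (cmpl_B M P_part BP). Qed.

Lemma Mplus_blk : Mplus P B M L Q hr = blk b 1%:M (E1^T *m Q1^T *m Mhat) M.
Proof.
rewrite /Mplus /blk mulmx1 -Mhat_N (cmpl_B M P_part BP).
rewrite !submE !trmx_mul !trmxK /proj !(mulmxDl, mulmxDr, mulmxA) !addrA.
by congr (_ + _); rewrite addrAC.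
Qed.

Lemma M_blk : M = blk b (L *m L^T) (L *m Mhat) M.
Proof. by rewrite {1}(blk_decomp b M_spd.1) -submE -LLt mulKVmx. Qed.

Lemma Mtilde_blk : Mtilde P B M L Q hr = blk b (L *m L^T) (L *m (Q1 *m Q1^T *m Mhat)) M.
Proof.
rewrite /Mtilde calB_embed Mplus_blk (blk_congr b_orth); last first.
  by rewrite -mulmxA Mhat_bT mulmx0.
have QQt : Q *m Q^T = 1%:M by apply: mulmx1C.
congr (blk _ _ _ _); last by rewrite Q1E !mulmxA.
by rewrite mulmx1 trmx_mul mulmxA -(mulmxA L) QQt mulmx1.
Qed.

Lemma Q1_fix q (Z : 'M[R]_(#|B|, q)) :
  (Z^T <= (Nmat P B M L Pi)^T)%MS -> Q1 *m Q1^T *m Z = Z.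
Proof.
move=> ZN; apply: colspan_proj_fix Q1_orth _.
by apply: submx_trans ZN _; case/andP: Q1_range.
Qed.

Lemma Esel_B_proj D : D \in P -> D != B -> b *m proj D = 0.
Proof.
move=> DP DB; rewrite /proj mulmxA Esel_disj ?mul0mx //.
exact: (disjoint_blocks P_part).
Qed.

(* [Q1 Q1^T] fixes [L^T (Pi_D)_B]: it is [L^T Phi_B] for [D = B], else [0]. *)
Lemma Q1_fix_B D : D \in P ->
  Q1 *m Q1^T *m (L^T *m (b *m (proj D *m Pi))) = L^T *m (b *m (proj D *m Pi)).
Proof.
move=> DP; have [-> | DB] := eqVneq D B; last first.
  by rewrite (mulmxA b) Esel_B_proj // !mul0mx !mulmx0.
by rewrite /proj !(mulmxA b) b_orth mul1mx -subrE Q1_fix ?Nmat_range_B.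
Qed.

(* [Q1 Q1^T] fixes [Mhat (Pi_D)]: it is [Mhat_BD Phi_D] for [D <> B], else [0]. *)
Lemma Q1_fix_Mhat D : D \in P ->
  Q1 *m Q1^T *m (Mhat *m (proj D *m Pi)) = Mhat *m (proj D *m Pi).
Proof.
move=> DP; have [-> | DB] := eqVneq D B.
  by rewrite /proj !mulmxA !(mulmx_cmpl_bT b_orth) !mul0mx.
have cmpl_D : cmpl b *m (Esel D)^T = (Esel D)^T.
  rewrite cmplE mulmxBl mul1mx -mulmxA Esel_disj ?mulmx0 ?subr0 //.
  exact: (disjoint_blocks P_part).
have -> : Mhat *m (proj D *m Pi) = invmx L *m subm B D M *m subr D Pi.
  by rewrite submE subrE /proj !mulmxA -(mulmxA _ (cmpl b)) cmpl_D.
by rewrite Q1_fix ?Nmat_range_block.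
Qed.

Lemma Mtilde_agrees D : D \in P ->
  M *m restr_rows D Pi = Mtilde P B M L Q hr *m restr_rows D Pi.
Proof.
move=> DP; rewrite restr_rowsE Mtilde_blk {1}M_blk; apply: blk_mul_eq.
  rewrite -[LHS]mulmxA -[RHS]mulmxA -(mulmxA (Q1 *m Q1^T)).
  by rewrite Q1_fix_Mhat.
rewrite !trmx_mul !trmxK -[in RHS](mulmxA _ L^T) -(mulmxA _ (Q1 *m Q1^T)).
by rewrite Q1_fix_B // [RHS]mulmxA.
Qed.

(* [M_(+)] is positive definite: its coupling [Q1^T Mhat_BN] is bounded by
   [Mhat_BN], which the Schur complement bound controls. *)
Lemma Mplus_posdef : sym_posdef (Mplus P B M L Q hr).
Proof.
rewrite Mplus_blk; apply: (blk_posdef b_orth _ M_spd.1).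
  by rewrite -mulmxA Mhat_bT mulmx0.
move=> z z_neq0 bz0.
have cmpl_z : cmpl b *m z = z by rewrite cmplE mulmxBl mul1mx -mulmxA bz0 mulmx0 subr0.
rewrite -!mulmxA cmpl_z (mulmxA b) dot_isometry ?E1_orth //.
apply: le_lt_trans (schur_gap b_orth M_spd L_unit _ z_neq0 bz0).
  by apply: dot_contract; rewrite trmxK Q1_orth.
by rewrite LLt submE.
Qed.

Lemma Mtilde_posdef : sym_posdef (Mtilde P B M L Q hr).
Proof.
have [_ Q_unit] := mulmx1_unit QtQ.
rewrite /Mtilde calB_embed; apply: posdef_congr Mplus_posdef _.
by apply: (embed_unit b_orth); rewrite unitmx_mul L_unit.
Qed.

End Lemma3p1.

Theorem lemma3p1 (R : realFieldType) (n p : nat) (M : 'M[R]_n)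
    (P : {set {set 'I_n}}) (B : {set 'I_n}) (Pi : 'M[R]_(n, p))
    (L Q : 'M[R]_#|B|) (r : nat) (hr : (r <= #|B|)%N) :
  sym_posdef M ->
  partition P [set: 'I_n] ->
  B \in P ->
  (* Cholesky factorization M_BB = L L^T *)
  is_trig_mx L -> (forall i, 0 < L i i) -> L *m L^T = subm B B M ->
  (* Q orthogonal, its first r columns Q1 span range(N) *)
  Q^T *m Q = 1%:M ->
  ((Q1of hr Q)^T == (Nmat P B M L Pi)^T)%MS ->
  (forall D, D \in P ->
     M *m restr_rows D Pi = Mtilde P B M L Q hr *m restr_rows D Pi)
  /\ sym_posdef (Mtilde P B M L Q hr).
Proof.
move=> M_spd P_part BP L_trig L_pos LLt QtQ Q1_range.
have L_unit := trig_posdiag_unit L_trig L_pos.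
split; first exact: Mtilde_agrees.
exact: Mtilde_posdef.
Qed.
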